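(* Let $q\ge 2$ and $e\ge 0$ be integers. The function $$B_H(n,e)=\frac{q^n}{\sum_{i=0}^e \binom ni (q-1)^i}$$ is log-convex in $n$, i.e. $B_H(n_1,e)B_H(n_2,e)\le B_H(n_1-1,e)B_H(n_2+1,e)$ for all integers $1\le n_1\le n_2$.
   Context: A positive function $f(j)$ of an integer argument is called log-convex if $f(j_1)f(j_2)\le f(j_1-1)f(j_2+1)$ for all $j_1\le j_2$ in the support of $f$. *)

From mathcomp Require Import all_boot all_order all_algebra.
Set Implicit Arguments. Unset Strict Implicit. Unset Printing Implicit Defensive.
Import Order.TTheory GRing.Theory Num.Theory.
Local Open Scope ring_scope.

Definition hamming_ball (q n e : nat) : rat :=
  \sum_(0 <= i < e.+1) ('C(n, i) * (q - 1) ^ i)%N%:R.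

Definition B_H (q n e : nat) : rat := (q ^ n)%N%:R / hamming_ball q n e.

(* The factors q^n cancel, so the claim is that the ball volume V(n) of
   radius e is log-concave in n.  Pascal's rule
   V_k(n+1) = V_k(n) + (q-1) V_(k-1)(n) reduces log-concavity in n to
   log-concavity in the radius k, which holds because the terms
   C(n,i) (q-1)^i form a log-concave sequence in i.  Local log-concavity
   of a positive sequence then yields the stated two-point inequality. *)
From mathcomp Require Import all_boot all_order all_algebra.
From mathcomp Require Import zify ring.
Import Order.TTheory GRing.Theory Num.Theory.

Lemma bin_log_concave m i j :
  i <= j -> 'C(m, j.+1) * 'C(m, i) <= 'C(m, j) * 'C(m, i.+1).
Proof.
move=> le_ij; rewrite -(@leq_pmul2r (i.+1 * j.+1)) //.
have -> : 'C(m, j.+1) * 'C(m, i) * (i.+1 * j.+1)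
          = 'C(m, i) * i.+1 * (j.+1 * 'C(m, j.+1)) by ring.
have -> : 'C(m, j) * 'C(m, i.+1) * (i.+1 * j.+1)
          = 'C(m, j) * j.+1 * (i.+1 * 'C(m, i.+1)) by ring.
rewrite !mul_bin_left.
have -> : 'C(m, i) * i.+1 * ((m - j) * 'C(m, j))
          = 'C(m, i) * 'C(m, j) * ((m - j) * i.+1) by ring.
have -> : 'C(m, j) * j.+1 * ((m - i) * 'C(m, i))
          = 'C(m, i) * 'C(m, j) * ((m - i) * j.+1) by ring.
by apply: leq_mul => //; nia.
Qed.

Section HammingBallSize.
Variable r : nat.

Definition ball_term n i := 'C(n, i) * r ^ i.

(* Number of words at distance < k (not <= k): with this convention
   ball_size 0 n = 0 and Pascal's rule below holds for every k. *)
Definition ball_size k n := \sum_(i < k) ball_term n i.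

Lemma ball_term_log_concave n i k :
  i <= k -> ball_term n k.+1 * ball_term n i <= ball_term n k * ball_term n i.+1.
Proof.
move=> le_ik; rewrite /ball_term.
have -> : 'C(n, k.+1) * r ^ k.+1 * ('C(n, i) * r ^ i)
          = 'C(n, k.+1) * 'C(n, i) * r ^ (k.+1 + i) by rewrite expnD; ring.
have -> : 'C(n, k) * r ^ k * ('C(n, i.+1) * r ^ i.+1)
          = 'C(n, k) * 'C(n, i.+1) * r ^ (k.+1 + i) by rewrite addSnnS expnD; ring.
by rewrite leq_mul2r bin_log_concave ?orbT.
Qed.

Lemma ball_sizeSr k n : ball_size k.+1 n = ball_size k n + ball_term n k.
Proof. by rewrite /ball_size big_ord_recr. Qed.

Lemma ball_sizeSl k n :
  ball_size k.+1 n = 1 + \sum_(i < k) ball_term n i.+1.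
Proof. by rewrite /ball_size big_ord_recl /ball_term bin0 expn0. Qed.

Lemma ball_size_gt0 k n : 0 < ball_size k.+1 n.
Proof. by rewrite ball_sizeSl. Qed.

Lemma ball_size_pascal k n :
  ball_size k.+1 n.+1 = ball_size k.+1 n + r * ball_size k n.
Proof.
rewrite !ball_sizeSl big_distrr -addnA -big_split /=; congr (1 + _).
by apply: eq_bigr => i _; rewrite /ball_term binS expnS; ring.
Qed.

Lemma ball_size_log_concave_radius k n :
  ball_size k n * ball_size k.+2 n <= ball_size k.+1 n * ball_size k.+1 n.
Proof.
have ratio : ball_term n k.+1 * ball_size k n <= ball_term n k * ball_size k.+1 n.
  rewrite /ball_size !big_distrr big_ord_recl /=.
  apply: leq_trans (leq_addl _ _); apply: leq_sum => i _.
  exact: ball_term_log_concave (ltnW (ltn_ord i)).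
by rewrite (ball_sizeSr k.+1) (ball_sizeSr k n) in ratio *; nia.
Qed.

Lemma ball_size_log_concave k m :
  ball_size k m * ball_size k m.+2 <= ball_size k m.+1 * ball_size k m.+1.
Proof.
case: k => [|[|k]]; first by rewrite /ball_size !big_ord0.
  by rewrite !ball_sizeSl !big_ord0.
have radius := ball_size_log_concave_radius k m.
rewrite !(ball_size_pascal k.+1) !(ball_size_pascal k).
set a := ball_size k.+2 m in radius *.
set b := ball_size k.+1 m in radius *.
set c := ball_size k m in radius *.
have : r * r * (c * a) <= r * r * (b * b) by rewrite leq_mul2l radius orbT.
nia.
Qed.

End HammingBallSize.

Local Open Scope ring_scope.

Lemma log_concave_shift (R : numDomainType) (f : nat -> R) :
  (forall m, 0 < f m) -> (forall m, f m * f m.+2 <= f m.+1 * f m.+1) ->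
  forall a b, (a <= b)%N -> f a * f b.+1 <= f a.+1 * f b.
Proof.
move=> f_gt0 f_lc a b; elim: b => [|b IHb].
  by rewrite leqn0 => /eqP ->; rewrite mulrC.
rewrite leq_eqVlt => /predU1P [-> | lt_ab]; first by rewrite mulrC.
rewrite -(ler_pM2r (f_gt0 b.+1)).
have shifted : f a * f b.+1 * f b.+2 <= f a.+1 * (f b * f b.+2).
  by rewrite mulrA; apply: ler_wpM2r; [exact: ltW | exact: IHb].
have local : f a.+1 * (f b * f b.+2) <= f a.+1 * (f b.+1 * f b.+1).
  by apply: ler_wpM2l; [exact: ltW | exact: f_lc].
by rewrite mulrAC -[leRHS]mulrA (le_trans shifted local).
Qed.

Lemma hamming_ballE q n e : hamming_ball q n e = (ball_size (q - 1) e.+1 n)%:R.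
Proof. by rewrite /hamming_ball /ball_size big_mkord natr_sum. Qed.

Theorem lemma1 (q e n1 n2 : nat) :
  (2 <= q)%N -> (1 <= n1)%N -> (n1 <= n2)%N ->
  B_H q n1 e * B_H q n2 e <= B_H q n1.-1 e * B_H q n2.+1 e.
Proof.
(* The inequality holds for every q. *)
move=> _; case: n1 => // a _ le_an2.
set V := hamming_ball q ^~ e.
have V_gt0 n : 0 < V n by rewrite /V hamming_ballE ltr0n ball_size_gt0.
have V_lc : V a * V n2.+1 <= V a.+1 * V n2.
  apply: log_concave_shift (ltnW le_an2) => // m.
  by rewrite /V !hamming_ballE -!natrM ler_nat ball_size_log_concave.
rewrite /B_H !mulf_div -!natrM -!expnD addSnnS.
by rewrite ler_wpM2l ?ler0n // lef_pV2 ?posrE ?mulr_gt0 ?V_gt0.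
Qed.
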